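(* Let $k$ be a positive integer and $G$ a finite, simple, undirected, connected graph. (a) If $\mathrm{diam}(G)\in\{1,2\}$, then $O_{R,k}(G)=O_R(G)$ for all positive integers $k$. (b) For positive integers $k<k'$, the pair $(O_{R,k}(G),O_{R,k'}(G))$ belongs to $\{(\mathcal{B},\mathcal{B}),(\mathcal{N},\mathcal{N}),(\mathcal{M},\mathcal{M}),(\mathcal{B},\mathcal{N}),(\mathcal{B},\mathcal{M}),(\mathcal{N},\mathcal{M})\}$; moreover, $O_{R,k_0}(G)=O_R(G)$ for every $k_0\ge \mathrm{diam}(G)-1$.
   Context: $d(x,y)$ is the shortest-path distance in $G$, $d_k(x,y)=\min\{d(x,y),k+1\}$, and $\mathrm{diam}(G)=\max_{x,y}d(x,y)$. A set $S\subseteq V(G)$ is a distance-$k$ resolving set if for all distinct $x,y\in V(G)$ some $z\in S$ has $d_k(x,z)\neq d_k(y,z)$; it is a resolving set if the same holds with $d$ in place of $d_k$. In the Maker-Breaker distance-$k$ resolving game (MB$k$RG) on $G$, Maker and Breaker alternately select a not-yet-chosen vertex; Maker wins if his selected vertices form a distance-$k$ resolving set, Breaker wins otherwise. The $M$-game ($B$-game) is the game where Maker (Breaker) moves first. $O_{R,k}(G)=\mathcal{M}$ if Maker wins both the $M$-game and $B$-game with optimal play, $\mathcal{B}$ if Breaker wins both, and $\mathcal{N}$ if the first player wins. $O_R(G)$ is defined in the same way for the Maker-Breaker resolving game, in which Maker must form a resolving set (with respect to $d$). Outcomes are ordered $\mathcal{B}<\mathcal{N}<\mathcal{M}$. *)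

From mathcomp Require Import all_boot.
Set Implicit Arguments. Unset Strict Implicit. Unset Printing Implicit Defensive.

Section Graph.
Variables (T : finType) (e : rel T).

Definition simple_graph := symmetric e /\ irreflexive e.
Definition connected_graph := forall x y : T, connect e x y.

Definition walkn (n : nat) (x y : T) : bool :=
  [exists p : n.-tuple T, path e x p && (last x p == y)].

(* shortest-path distance: the least n < #|T| with a walk of length n
   (always exists in a connected graph; #|T| otherwise). *)
Definition dist (x y : T) : nat := find (fun n => walkn n x y) (iota 0 #|T|).

Definition distk (k : nat) (x y : T) : nat := minn (dist x y) k.+1.

Definition diam : nat := \max_(x : T) \max_(y : T) dist x y.

Definition resolvingb (d : T -> T -> nat) (S : {set T}) : bool :=
  [forall x, forall y, (x != y) ==> [exists z in S, d x z != d y z]].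

(* Maker–Breaker game on the vertex set: M = Maker's vertices,
   B = Breaker's vertices, makerTurn = whose move it is.  The game ends when
   all vertices are chosen; Maker wins iff his set satisfies W.
   [maker_wins W M B t n] = Maker has a winning strategy (n is fuel, >= number
   of free vertices). *)
Fixpoint maker_wins (W : pred {set T}) (M B : {set T}) (makerTurn : bool)
    (n : nat) : bool :=
  match n with
  | 0 => W M
  | n'.+1 =>
      if ~: (M :|: B) == set0 then W M
      else if makerTurn then
        [exists v in ~: (M :|: B), maker_wins W (v |: M) B false n']
      else
        [forall v in ~: (M :|: B), maker_wins W M (v |: B) true n']
  end.

Definition maker_wins_Mgame (W : pred {set T}) : bool :=
  maker_wins W set0 set0 true #|T|.
Definition maker_wins_Bgame (W : pred {set T}) : bool :=
  maker_wins W set0 set0 false #|T|.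

End Graph.

Inductive outcome := OutB | OutN | OutM.

(* Outcome: M if Maker wins both games, B if Breaker wins both,
   N otherwise (i.e. the first player wins; the remaining combination
   "second player wins both" cannot occur in a Maker-Breaker game). *)
Definition outcome_of (mM mB : bool) : outcome :=
  if mM && mB then OutM else if ~~ mM && ~~ mB then OutB else OutN.

Definition game_outcome (T : finType) (d : T -> T -> nat) : outcome :=
  outcome_of (maker_wins_Mgame (resolvingb d)) (maker_wins_Bgame (resolvingb d)).

Definition O_R (T : finType) (e : rel T) : outcome := game_outcome (dist e).
Definition O_Rk (T : finType) (e : rel T) (k : nat) : outcome :=
  game_outcome (distk e k).

From mathcomp Require Import all_boot.

(* For k <= k', the truncated distance d_k = min (d_k', k + 1) is a function of
   d_k', so any set resolving for d_k also resolves for d_k'.  A Maker win in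
   either game therefore transfers from k to k', which makes the outcome
   monotone in k.  Once k + 1 >= diam G, truncation does nothing and d_k = d. *)

Definition outcome_le (o o' : outcome) : bool :=
  match o, o' with
  | OutB, _ | OutN, OutN | OutN, OutM | OutM, OutM => true
  | _, _ => false
  end.

Lemma outcome_le_anti (o o' : outcome) :
  outcome_le o o' -> outcome_le o' o -> o = o'.
Proof. by case: o; case: o'. Qed.

Lemma outcome_le_cases (o o' : outcome) : outcome_le o o' ->
  let p := (o, o') in
  p = (OutB, OutB) \/ p = (OutN, OutN) \/ p = (OutM, OutM) \/
  p = (OutB, OutN) \/ p = (OutB, OutM) \/ p = (OutN, OutM).
Proof. by case: o; case: o' => //=; tauto. Qed.

Lemma outcome_of_le (a b c d : bool) :
  (a -> c) -> (b -> d) -> outcome_le (outcome_of a b) (outcome_of c d).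
Proof.
move=> /implyP ac /implyP bd.
by case: a c ac => [] [] //= _; case: b d bd => [] [] //= _.
Qed.

Section Games.
Variable T : finType.

Lemma maker_wins_mono (W1 W2 : pred {set T}) :
  (forall S, W1 S -> W2 S) ->
  forall n M B t, maker_wins W1 M B t n -> maker_wins W2 M B t n.
Proof.
move=> W12; elim=> [|n IHn] M B t /=; first exact: W12.
case: ifP => _; first exact: W12.
case: t.
- by case/exists_inP=> v freev winv; apply/exists_inP; exists v; last exact: IHn.
- by move/forall_inP=> win; apply/forall_inP=> v freev; apply: IHn; apply: win.
Qed.

Lemma resolvingb_factor (d1 d2 : T -> T -> nat) (f : nat -> nat) (S : {set T}) :
  (forall x y, d1 x y = f (d2 x y)) -> resolvingb d1 S -> resolvingb d2 S.
Proof.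
move=> d1E /forallP res1; apply/forallP=> x; apply/forallP=> y; apply/implyP=> xy.
have /exists_inP[z zS dz] := implyP (forallP (res1 x) y) xy.
by apply/exists_inP; exists z => //; apply: contra dz; rewrite !d1E => /eqP->.
Qed.

Lemma game_outcome_factor (f : nat -> nat) (d1 d2 : T -> T -> nat) :
  (forall x y, d1 x y = f (d2 x y)) ->
  outcome_le (game_outcome d1) (game_outcome d2).
Proof.
move=> d1E; have res12 S := @resolvingb_factor d1 d2 f S d1E.
by apply: outcome_of_le; apply: maker_wins_mono.
Qed.

Lemma eq_game_outcome (d1 d2 : T -> T -> nat) :
  (forall x y, d1 x y = d2 x y) -> game_outcome d1 = game_outcome d2.
Proof.
move=> d12; apply: outcome_le_anti; first exact: (game_outcome_factor id).
by apply: (game_outcome_factor id) => x y; rewrite d12.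
Qed.

Variable e : rel T.

Lemma dist_le_diam (x y : T) : dist e x y <= diam e.
Proof.
rewrite /diam (bigD1 x) //= (bigD1 y) //= -maxnA.
exact: leq_maxl.
Qed.

Lemma distk_minn (k k' : nat) (x y : T) : k <= k' ->
  distk e k x y = minn (distk e k' x y) k.+1.
Proof.
by move=> kk'; rewrite /distk -minnA (minn_idPr (_ : k < k'.+1)).
Qed.

Lemma O_Rk_mono (k k' : nat) : k <= k' -> outcome_le (O_Rk e k) (O_Rk e k').
Proof.
move=> kk'; apply: (game_outcome_factor (minn^~ k.+1)) => x y.
exact: distk_minn.
Qed.

Lemma O_Rk_diam (k : nat) : diam e <= k.+1 -> O_Rk e k = O_R e.
Proof.
move=> diam_k; apply: eq_game_outcome => x y.
by apply/minn_idPl; apply: leq_trans diam_k; apply: dist_le_diam.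
Qed.

End Games.

Theorem corollary2p5 (T : finType) (e : rel T) :
  simple_graph e -> connected_graph e ->
  ((diam e = 1 \/ diam e = 2) -> forall k : nat, 0 < k -> O_Rk e k = O_R e) /\
  (forall k k' : nat, 0 < k -> k < k' ->
     let p := (O_Rk e k, O_Rk e k') in
     p = (OutB, OutB) \/ p = (OutN, OutN) \/ p = (OutM, OutM) \/
     p = (OutB, OutN) \/ p = (OutB, OutM) \/ p = (OutN, OutM)) /\
  (forall k0 : nat, 0 < k0 -> diam e - 1 <= k0 -> O_Rk e k0 = O_R e).
Proof.
move=> _ _; split; last split.
- by move=> small_diam [|k] // _; apply: O_Rk_diam; case: small_diam => ->.
- by move=> k k' _ kk'; apply: outcome_le_cases; apply: O_Rk_mono; apply: ltnW.
- by move=> k0 _; rewrite leq_subLR add1n; apply: O_Rk_diam.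
Qed.
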